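(* Let $f\in\mathbb R[x_1,\dots,x_n]$ be a polynomial satisfying conditions (C1), (C2) and (C3), and let $\lambda_f$ be a map of minimal barycentric coordinates of $f$. Suppose that for every $\alpha\in V(f)$ the inequality \[ f_{\alpha}\;>\;\sum_{\alpha^\star\in D(f)\cap (2\mathbb N_0^n)^c}|f_{\alpha^\star}|\,\lambda_f(\alpha^\star,\alpha)\;-\;\sum_{\alpha^\star\in D(f)\cap 2\mathbb N_0^n}\min\{0,f_{\alpha^\star}\}\,\lambda_f(\alpha^\star,\alpha) \] holds. Then $f$ is coercive on $\mathbb R^n$, i.e. $f(x)\to+\infty$ whenever $\|x\|\to+\infty$.
   Context: Notation: $\mathbb N_0=\mathbb N\cup\{0\}$, $[n]=\{1,\dots,n\}$, $e_i$ the standard unit vectors, $(2\mathbb N_0^n)^c=\mathbb N_0^n\setminus 2\mathbb N_0^n$. Write $f(x)=\sum_{\alpha\in A(f)}f_\alpha x^\alpha$ with $A(f)\subseteq\mathbb N_0^n$ finite and $f_\alpha\neq0$ for $\alpha\in A(f)$. The Newton polytope at infinity is $\mathrm{New}_\infty(f)=\mathrm{conv}(A(f)\cup\{0\})$; $V_0(f)$ is its vertex set (it contains $0$), $V(f)=V_0(f)\setminus\{0\}$ (vertices at infinity), $V_0^c(f)=A(f)\setminus V_0(f)$, $V^c(f)=A(f)\setminus V(f)$. Conditions: (C1) $V(f)\subset 2\mathbb N_0^n$; (C2) $f_\alpha>0$ for all $\alpha\in V(f)$; (C3) for every $i\in[n]$, $V(f)$ contains a vector $2k_ie_i$ with $k_i\in\mathbb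 N$. Let $\mathcal G(f)$ be the set of nonempty faces $G$ of $\mathrm{New}_\infty(f)$ with $0\notin G$. An exponent $\alpha\in A(f)$ is gem degenerate if $\alpha\in V^c(f)\cap G$ for some $G\in\mathcal G(f)$; $D(f)$ denotes the set of gem degenerate exponents. A map of minimal barycentric coordinates of $f$ is a map $\lambda_f:V_0^c(f)\times V_0(f)\to[0,1]$ such that for each $\alpha^\star\in V_0^c(f)$ there is an affinely independent set $W_{\alpha^\star}\subseteq V_0(f)$ with $\lambda_f(\alpha^\star,\alpha)>0$ for $\alpha\in W_{\alpha^\star}$, $\lambda_f(\alpha^\star,\alpha)=0$ for $\alpha\in V_0(f)\setminus W_{\alpha^\star}$, and $\sum_{\alpha\in W_{\alpha^\star}}\lambda_f(\alpha^\star,\alpha)(\alpha,1)=(\alpha^\star,1)$. (Note $D(f)\subseteq V_0^c(f)$ under (C3).) *)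

(* real polynomials in n variables, represented by their
   support A(f) (a duplicate-free list of exponent vectors, each a list of
   n naturals) and a coefficient function. *)
From Stdlib Require Import Reals List Arith ClassicalEpsilon.
Import ListNotations.
Open Scope R_scope.

Definition expo := list nat.

Definition lsum {T : Type} (l : list T) (g : T -> R) : R :=
  fold_right (fun a s => g a + s) 0 l.

Definition lsum_if {T : Type} (P : T -> Prop) (l : list T) (g : T -> R) : R :=
  lsum l (fun a => if excluded_middle_informative (P a) then g a else 0).

Definition coordR (a : expo) (i : nat) : R := INR (nth i a 0%nat).

Definition zero_expo (n : nat) : expo := repeat 0%nat n.

Definition scaled_unit (n i m : nat) : expo :=
  map (fun j => if Nat.eqb j i then m else 0%nat) (seq 0 n).

Definition even_expo (a : expo) : Prop := forall i, Nat.Even (nth i a 0%nat).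

Definition monomial (n : nat) (a : expo) (x : nat -> R) : R :=
  fold_right Rmult 1 (map (fun i => x i ^ nth i a 0%nat) (seq 0 n)).
Definition peval (n : nat) (A : list expo) (c : expo -> R) (x : nat -> R) : R :=
  lsum A (fun a => c a * monomial n a x).

Definition norm2 (n : nat) (x : nat -> R) : R :=
  sqrt (lsum (seq 0 n) (fun i => x i ^ 2)).

Definition is_vertex (n : nat) (S : list expo) (v : expo) : Prop :=
  In v S /\
  ~ (exists wl : list (R * expo),
        (forall p, In p wl -> 0 <= fst p /\ In (snd p) S /\ snd p <> v) /\
        lsum wl fst = 1 /\
        (forall i, (i < n)%nat -> lsum wl (fun p => fst p * coordR (snd p) i) = coordR v i)).

(* V_0(f): vertices of New_inf(f) = conv(A(f) ∪ {0}) *)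
Definition in_V0 (n : nat) (A : list expo) (v : expo) : Prop :=
  is_vertex n (zero_expo n :: A) v.

Definition in_V (n : nat) (A : list expo) (v : expo) : Prop :=
  in_V0 n A v /\ v <> zero_expo n.

Definition in_V0c (n : nat) (A : list expo) (a : expo) : Prop :=
  In a A /\ ~ in_V0 n A a.

Definition dotR (n : nat) (w : nat -> R) (a : expo) : R :=
  lsum (seq 0 n) (fun i => w i * coordR a i).

(* a lies in a nonempty face G of New_inf(f) with 0 ∉ G: every face of a
   polytope is the set of maximizers of a linear functional w, and 0 ∉ G
   means the maximum value is > w.0 = 0. *)
Definition in_face_avoiding_0 (n : nat) (A : list expo) (a : expo) : Prop :=
  exists w : nat -> R,
    (forall b, In b A -> dotR n w b <= dotR n w a) /\ 0 < dotR n w a.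

Definition gem_degenerate (n : nat) (A : list expo) (a : expo) : Prop :=
  In a A /\ ~ in_V n A a /\ in_face_avoiding_0 n A a.

(* affine independence of a finite (duplicate-free) set W: the vectors
   (w,1), w in W, are linearly independent *)
Definition aff_indep (n : nat) (W : list expo) : Prop :=
  forall mu : expo -> R,
    (forall i, (i < n)%nat -> lsum W (fun w => mu w * coordR w i) = 0) ->
    lsum W mu = 0 ->
    forall w, In w W -> mu w = 0.

(* lam is a map of minimal barycentric coordinates of f
   (lam : V_0^c(f) x V_0(f) -> [0,1]; values elsewhere are irrelevant) *)
Definition min_bary_coords (n : nat) (A : list expo) (lam : expo -> expo -> R) : Prop :=
  forall a, in_V0c n A a ->
    (forall v, in_V0 n A v -> 0 <= lam a v <= 1) /\
    exists W : list expo,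
      NoDup W /\ (forall w, In w W -> in_V0 n A w) /\ aff_indep n W /\
      (forall w, In w W -> 0 < lam a w) /\
      (forall v, in_V0 n A v -> ~ In v W -> lam a v = 0) /\
      (forall i, (i < n)%nat -> lsum W (fun w => lam a w * coordR w i) = coordR a i) /\
      lsum W (fun w => lam a w) = 1.

Definition poly_support (n : nat) (A : list expo) (c : expo -> R) : Prop :=
  NoDup A /\ (forall a, In a A -> length a = n) /\ (forall a, In a A -> c a <> 0).

Definition cond_C1 (n : nat) (A : list expo) : Prop :=
  forall a, in_V n A a -> even_expo a.
Definition cond_C2 (n : nat) (A : list expo) (c : expo -> R) : Prop :=
  forall a, in_V n A a -> 0 < c a.
Definition cond_C3 (n : nat) (A : list expo) : Prop :=
  forall i, (i < n)%nat -> exists k, (1 <= k)%nat /\ in_V n A (scaled_unit n i (2 * k)).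

Definition coercive (n : nat) (A : list expo) (c : expo -> R) : Prop :=
  forall M : R, exists r : R, forall x : nat -> R, r < norm2 n x -> M < peval n A c x.

(* Let S(x) be the sum of the vertex monomials x^v, v in V(f); they are nonnegative by (C1).
   Weighted AM-GM along the barycentric coordinates gives |x^a| <= 1 + sum_v lam(a,v) x^v for
   every non-vertex exponent a, so a gem degenerate term is bounded below by
   -kappa_a (1 + sum_v lam(a,v) x^v), where kappa_a is |f_a| or -min(0, f_a) according to the
   parity of a.  An exponent lying on no face avoiding 0 is, by Farkas' lemma, a nonnegative
   combination of exponents of A(f) of total weight < 1, so its monomial is o(1 + S(x)).
   The dominance hypothesis then gives f(x) >= d S(x) - K with d > 0, and by (C3) S(x)
   grows like ||x||^2. *)

From Stdlib Require Import Reals List Lra Lia Permutation Classical ClassicalEpsilon RList.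
Import ListNotations.
Open Scope R_scope.

Notation decide P := (excluded_middle_informative P).

Section FiniteSums.
Context {T : Type}.
Implicit Types (l : list T) (f g : T -> R).

Lemma lsum_cons a l g : lsum (a :: l) g = g a + lsum l g.
Proof. reflexivity. Qed.

Lemma lsum_app l1 l2 g : lsum (l1 ++ l2) g = lsum l1 g + lsum l2 g.
Proof. induction l1; simpl; [lra|]. unfold lsum in *; simpl. rewrite IHl1; lra. Qed.

Lemma lsum_add l f g : lsum l (fun a => f a + g a) = lsum l f + lsum l g.
Proof. induction l; simpl; [lra|]. unfold lsum in *; simpl. rewrite IHl; lra. Qed.

Lemma lsum_sub l f g : lsum l (fun a => f a - g a) = lsum l f - lsum l g.
Proof. induction l; simpl; [lra|]. unfold lsum in *; simpl. rewrite IHl; lra. Qed.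

Lemma lsum_scal_l l k g : lsum l (fun a => k * g a) = k * lsum l g.
Proof. induction l; simpl; [lra|]. unfold lsum in *; simpl. rewrite IHl; lra. Qed.

Lemma lsum_scal_r l k g : lsum l (fun a => g a * k) = lsum l g * k.
Proof. induction l; simpl; [lra|]. unfold lsum in *; simpl. rewrite IHl; lra. Qed.

Lemma lsum_const l k : lsum l (fun _ => k) = INR (length l) * k.
Proof. induction l; [simpl; ring|]. rewrite lsum_cons, IHl. cbn [length]. rewrite S_INR. ring. Qed.

Lemma lsum_ext l f g : (forall a, In a l -> f a = g a) -> lsum l f = lsum l g.
Proof.
  induction l as [|a l IH]; intros H; [reflexivity|]. rewrite !lsum_cons.
  rewrite H by (simpl; auto). rewrite IH by (intros; apply H; simpl; auto). reflexivity.
Qed.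

Lemma lsum_le l f g : (forall a, In a l -> f a <= g a) -> lsum l f <= lsum l g.
Proof.
  induction l as [|a l IH]; intros H; [simpl; lra|]. rewrite !lsum_cons.
  apply Rplus_le_compat; [apply H; simpl; auto|apply IH; intros; apply H; simpl; auto].
Qed.

Lemma lsum_nonneg l g : (forall a, In a l -> 0 <= g a) -> 0 <= lsum l g.
Proof. intros H. rewrite <- (Rmult_0_r (INR (length l))), <- lsum_const. apply lsum_le; auto. Qed.

Lemma elem_le_lsum l g a : In a l -> (forall b, In b l -> 0 <= g b) -> g a <= lsum l g.
Proof.
  induction l as [|b l IH]; intros Ha H; [destruct Ha|]. rewrite lsum_cons.
  assert (0 <= g b) by (apply H; simpl; auto).
  assert (0 <= lsum l g) by (apply lsum_nonneg; intros; apply H; simpl; auto).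
  destruct Ha as [->|Ha]; [lra|].
  assert (g a <= lsum l g) by (apply IH; auto; intros; apply H; simpl; auto). lra.
Qed.

Lemma lsum_perm l1 l2 g : Permutation l1 l2 -> lsum l1 g = lsum l2 g.
Proof. induction 1; rewrite ?lsum_cons; lra. Qed.

Lemma lsum_incl_le l1 l2 g : NoDup l1 -> incl l1 l2 ->
  (forall b, In b l2 -> 0 <= g b) -> lsum l1 g <= lsum l2 g.
Proof.
  revert l2. induction l1 as [|a l1 IH]; intros l2 Hnd Hincl Hg.
  - apply lsum_nonneg; auto.
  - apply NoDup_cons_iff in Hnd as [Ha Hnd].
    destruct (in_split a l2) as [u [v ->]]; [apply Hincl; simpl; auto|].
    rewrite (lsum_perm (u ++ a :: v) (a :: u ++ v)) by (symmetry; apply Permutation_middle).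
    rewrite !lsum_cons. apply Rplus_le_compat_l. apply IH; auto.
    + intros y Hy. assert (Hy' : In y (u ++ a :: v)) by (apply Hincl; simpl; auto).
      rewrite in_app_iff in *. simpl in Hy'. destruct Hy' as [|[->|]]; tauto.
    + intros y Hy. apply Hg. rewrite in_app_iff in *. simpl. tauto.
Qed.

Lemma lsum_map {U} (h : U -> T) (l : list U) g : lsum (map h l) g = lsum l (fun a => g (h a)).
Proof. induction l; [reflexivity|]. cbn [map]. rewrite !lsum_cons, IHl. reflexivity. Qed.

End FiniteSums.

Lemma lsum_swap {T U} (l : list T) (m : list U) (F : T -> U -> R) :
  lsum l (fun a => lsum m (fun b => F a b)) = lsum m (fun b => lsum l (fun a => F a b)).
Proof.
  induction l as [|a l IH].
  - simpl. rewrite lsum_const. ring.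
  - rewrite lsum_cons, IH, <- lsum_add. apply lsum_ext. reflexivity.
Qed.

Definition when (P : Prop) (r : R) : R := if decide P then r else 0.

Lemma when_true (P : Prop) r : P -> when P r = r.
Proof. intros H. unfold when. destruct (decide P); tauto. Qed.

Lemma when_false (P : Prop) r : ~ P -> when P r = 0.
Proof. intros H. unfold when. destruct (decide P); tauto. Qed.

Lemma lsum_if_when {T} (P : T -> Prop) l g : lsum_if P l g = lsum l (fun a => when (P a) (g a)).
Proof. reflexivity. Qed.

Lemma lsum_if_le {T} (P : T -> Prop) l (f g : T -> R) :
  (forall a, In a l -> P a -> f a <= g a) -> lsum_if P l f <= lsum_if P l g.
Proof. intros H. apply lsum_le. intros a Ha. unfold when. destruct (decide (P a)); auto. lra. Qed.

Lemma lsum_if_nonneg {T} (P : T -> Prop) l (g : T -> R) :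
  (forall a, In a l -> P a -> 0 <= g a) -> 0 <= lsum_if P l g.
Proof. intros H. apply lsum_nonneg. intros a Ha. unfold when. destruct (decide (P a)); auto. lra. Qed.

Lemma lsum_if_scal_r {T} (P : T -> Prop) l (g : T -> R) k :
  lsum_if P l g * k = lsum_if P l (fun a => g a * k).
Proof. rewrite lsum_if_when, <- lsum_scal_r. apply lsum_ext. intros. unfold when. destruct (decide (P a)); ring. Qed.

Lemma lsum_if_sub {T} (P : T -> Prop) l (f g : T -> R) :
  lsum_if P l (fun a => f a - g a) = lsum_if P l f - lsum_if P l g.
Proof. rewrite !lsum_if_when, <- lsum_sub. apply lsum_ext. intros. unfold when. destruct (decide (P a)); ring. Qed.

Lemma exists_between (ls us : list R) : (forall l u, In l ls -> In u us -> l <= u) ->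
  exists t, (forall l, In l ls -> l <= t) /\ (forall u, In u us -> t <= u).
Proof.
  intros H. destruct ls as [|l0 ls].
  - exists (MinRlist us). split; [intros _ []|apply MinRlist_P1].
  - exists (MaxRlist (l0 :: ls)). split; [apply MaxRlist_P1|].
    intros u Hu. apply H; auto. apply MaxRlist_P2. exists l0; simpl; auto.
Qed.

Lemma exists_pos_lower_bound {T} (l : list T) (P : T -> Prop) (d : T -> R) :
  (forall a, In a l -> P a -> 0 < d a) -> exists e, 0 < e /\ forall a, In a l -> P a -> e <= d a.
Proof.
  intros H. set (d' := fun a => if decide (P a) then d a else 1).
  exists (MinRlist (map d' l)). split.
  - apply MinRlist_P2. intros y Hy. apply in_map_iff in Hy as [a [<- Ha]].
    unfold d'. destruct (decide (P a)); [auto|lra].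
  - intros a Ha HP. replace (d a) with (d' a) by (unfold d'; destruct (decide (P a)); tauto).
    apply MinRlist_P1, in_map; auto.
Qed.

Lemma exists_uniform_bound {T} (l : list T) (P : T -> R -> Prop) :
  (forall a C C', In a l -> C <= C' -> P a C -> P a C') ->
  (forall a, In a l -> exists C, P a C) -> exists C, forall a, In a l -> P a C.
Proof.
  intros Hmono. induction l as [|a l IH]; intros H; [exists 0; intros _ []|].
  destruct (H a) as [Ca Ha]; [simpl; auto|].
  destruct IH as [C HC]; [intros; eapply Hmono; simpl; eauto|intros; apply H; simpl; auto|].
  exists (Rmax Ca C). intros b [<-|Hb].
  - eapply Hmono; [simpl; auto|apply Rmax_l|auto].
  - eapply Hmono; [simpl; auto|apply Rmax_r|auto].
Qed.

Lemma exp_le_exp x y : x <= y -> exp x <= exp y.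
Proof. intros [H|H]; [left; apply exp_increasing, H|right; rewrite H; reflexivity]. Qed.

Lemma ln_le x y : 0 < x -> x <= y -> ln x <= ln y.
Proof. intros Hx [H|H]; [left; apply ln_increasing; auto|right; rewrite H; reflexivity]. Qed.

Lemma Rmult_ge_opp_abs_bound k m B : Rabs m <= B -> - (Rabs k * B) <= k * m.
Proof.
  intros Hm. enough (- (k * m) <= Rabs k * B) by lra.
  eapply Rle_trans; [apply Rle_abs|]. rewrite Rabs_Ropp, Rabs_mult.
  apply Rmult_le_compat_l; [apply Rabs_pos|exact Hm].
Qed.

Lemma exp_convex_comb {T} (l : list T) (mu y : T -> R) :
  (forall a, In a l -> 0 <= mu a) -> lsum l mu = 1 ->
  exp (lsum l (fun a => mu a * y a)) <= lsum l (fun a => mu a * exp (y a)).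
Proof.
  intros Hmu H1. set (m := lsum l (fun a => mu a * y a)).
  apply Rle_trans with (lsum l (fun a => mu a * (exp m * (1 + (y a - m))))).
  - right. transitivity (exp m * lsum l (fun a => mu a + mu a * y a - m * mu a)).
    + rewrite lsum_sub, lsum_add, lsum_scal_l, H1. fold m. ring.
    + rewrite <- lsum_scal_l. apply lsum_ext. intros; ring.
  - apply lsum_le. intros a Ha. apply Rmult_le_compat_l; [auto|].
    replace (exp (y a)) with (exp m * exp (y a - m)) by (rewrite <- exp_plus; f_equal; ring).
    apply Rmult_le_compat_l; [left; apply exp_pos|apply exp_ineq1_le].
Qed.

Lemma Rpower_sublinear s eps : s < 1 -> 0 < eps ->
  exists C, 0 <= C /\ forall T, 1 <= T -> Rpower T s <= eps * T + C.
Proof.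
  intros Hs Heps. set (K := - ln eps / (1 - s)).
  exists (exp (Rabs K)). split; [left; apply exp_pos|]. intros T HT. unfold Rpower.
  assert (HL : 0 <= ln T) by (rewrite <- ln_1; apply ln_le; lra).
  assert (ET : T = exp (ln T)) by (rewrite exp_ln; lra).
  set (L := ln T) in *.
  destruct (Rle_lt_dec (- ln eps) ((1 - s) * L)) as [Hbig|Hsmall].
  - assert (1 <= eps * exp ((1 - s) * L)).
    { rewrite <- (exp_ln eps) at 1 by auto. rewrite <- exp_plus, <- exp_0 at 1.
      apply exp_le_exp. lra. }
    assert (eps * T = eps * exp ((1 - s) * L) * exp (s * L))
      by (rewrite ET, Rmult_assoc, <- exp_plus; do 2 f_equal; ring).
    pose proof (exp_pos (s * L)). pose proof (exp_pos (Rabs K)). nra.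
  - assert (s * L <= Rabs K).
    { apply Rle_trans with L; [nra|]. apply Rle_trans with K; [|apply Rle_abs].
      unfold K. apply Rmult_le_reg_r with (1 - s); [lra|]. unfold Rdiv.
      rewrite Rmult_assoc, Rinv_l by lra. lra. }
    assert (0 < eps * T) by (apply Rmult_lt_0_compat; lra).
    apply exp_le_exp in H. lra.
Qed.

Lemma sqr_sub_1_le_pow_even y k : (1 <= k)%nat -> y ^ 2 - 1 <= y ^ (2 * k).
Proof.
  intros Hk. rewrite pow_mult. pose proof (pow2_ge_0 y).
  destruct (Rle_lt_dec 1 (y ^ 2)) as [Hge|Hlt].
  - apply Rle_trans with (y ^ 2); [lra|]. rewrite <- (pow_1 (y ^ 2)) at 1. apply Rle_pow; auto.
  - pose proof (pow_le (y ^ 2) k H). lra.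
Qed.

Definition constraint := ((nat -> R) * R)%type.

Definition lin_form (m : nat) (a u : nat -> R) : R := lsum (seq 0 m) (fun i => a i * u i).

Definition feasible (m : nat) (L : list constraint) : Prop :=
  exists u, forall k, In k L -> lin_form m (fst k) u <= snd k.

Inductive derivable (L : list constraint) : (nat -> R) -> R -> Prop :=
| der_hyp a c : In (a, c) L -> derivable L a c
| der_add a1 c1 a2 c2 : derivable L a1 c1 -> derivable L a2 c2 ->
    derivable L (fun i => a1 i + a2 i) (c1 + c2)
| der_scale k a c : 0 <= k -> derivable L a c -> derivable L (fun i => k * a i) (k * c)
| der_trivial c : 0 <= c -> derivable L (fun _ => 0) c.

Lemma lin_form_comb m a b s t u :
  lin_form m (fun i => s * a i + t * b i) u = s * lin_form m a u + t * lin_form m b u.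
Proof. unfold lin_form. rewrite <- !lsum_scal_l, <- lsum_add. apply lsum_ext; intros; ring. Qed.

Lemma lin_form_S m a u : lin_form (S m) a u = lin_form m a u + a m * u m.
Proof. unfold lin_form. rewrite seq_S, lsum_app. simpl. ring. Qed.

Lemma lin_form_ext m a u v : (forall i, (i < m)%nat -> u i = v i) -> lin_form m a u = lin_form m a v.
Proof. intros H. apply lsum_ext. intros i Hi. apply in_seq in Hi. rewrite H by lia. reflexivity. Qed.

Lemma derivable_trans L L' a c : derivable L' a c ->
  (forall k, In k L' -> derivable L (fst k) (snd k)) -> derivable L a c.
Proof. induction 1; intros HL'; [apply (HL' (a, c))|apply der_add|apply der_scale|apply der_trivial]; auto. Qed.

Lemma derivable_coord_zero L m a c : derivable L a c ->
  (forall k, In k L -> fst k m = 0) -> a m = 0.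
Proof.
  induction 1; intros HL; [apply (HL (a, c)); auto| |rewrite IHderivable by auto; ring|reflexivity].
  rewrite IHderivable1, IHderivable2 by auto. ring.
Qed.

Section Elimination.
Variable m : nat.

Definition zero_at (L : list constraint) := filter (fun k => if Req_EM_T (fst k m) 0 then true else false) L.
Definition pos_at (L : list constraint) := filter (fun k => if Rlt_dec 0 (fst k m) then true else false) L.
Definition neg_at (L : list constraint) := filter (fun k => if Rlt_dec (fst k m) 0 then true else false) L.

Lemma in_zero_at L k : In k (zero_at L) <-> In k L /\ fst k m = 0.
Proof. unfold zero_at. rewrite filter_In. destruct (Req_EM_T (fst k m) 0); intuition congruence. Qed.
Lemma in_pos_at L k : In k (pos_at L) <-> In k L /\ 0 < fst k m.
Proof. unfold pos_at. rewrite filter_In. destruct (Rlt_dec 0 (fst k m)); intuition congruence. Qed.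
Lemma in_neg_at L k : In k (neg_at L) <-> In k L /\ fst k m < 0.
Proof. unfold neg_at. rewrite filter_In. destruct (Rlt_dec (fst k m) 0); intuition congruence. Qed.

(* for [fst p m > 0 > fst q m]: the positive combination of [p] and [q] cancelling coordinate [m] *)
Definition cancel_at (p q : constraint) : constraint :=
  ((fun i => - fst q m * fst p i + fst p m * fst q i), - fst q m * snd p + fst p m * snd q).

Definition eliminate (L : list constraint) : list constraint :=
  zero_at L ++ flat_map (fun p => map (cancel_at p) (neg_at L)) (pos_at L).

Lemma in_eliminate L k : In k (eliminate L) ->
  (In k L /\ fst k m = 0) \/
  exists p q, In p L /\ 0 < fst p m /\ In q L /\ fst q m < 0 /\ k = cancel_at p q.
Proof.
  unfold eliminate. rewrite in_app_iff, in_zero_at, in_flat_map. intros [H|[p [Hp Hk]]]; [auto|].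
  apply in_map_iff in Hk as [q [<- Hq]]. apply in_pos_at in Hp. apply in_neg_at in Hq.
  right. exists p, q. tauto.
Qed.

Lemma cancel_at_in_eliminate L p q : In p L -> 0 < fst p m -> In q L -> fst q m < 0 ->
  In (cancel_at p q) (eliminate L).
Proof.
  intros. unfold eliminate. apply in_or_app. right. apply in_flat_map.
  exists p. split; [apply in_pos_at; auto|]. apply in_map, in_neg_at. auto.
Qed.

Lemma eliminate_derivable L k : In k (eliminate L) -> derivable L (fst k) (snd k).
Proof.
  intros [[Hk _]|[[ap cp] [[aq cq] [Hp [Pp [Hq [Nq ->]]]]]]]%in_eliminate; simpl in *.
  - destruct k. apply der_hyp. auto.
  - apply der_add; apply der_scale; try lra; apply der_hyp; auto.
Qed.

Lemma eliminate_coord_zero L k : In k (eliminate L) -> fst k m = 0.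
Proof. intros [[_ H]|[p [q [_ [_ [_ [_ ->]]]]]]]%in_eliminate; [auto|simpl; ring]. Qed.

(* Solving each constraint for [u m] gives lower bounds (from [neg_at]) and upper
   bounds (from [pos_at]); feasibility of [eliminate L] says each lower bound is
   below each upper bound, so some value of [u m] fits between them. *)
Lemma eliminate_feasible L : feasible m (eliminate L) -> feasible (S m) L.
Proof.
  intros [u Hu]. pose (bound := fun k : constraint => (snd k - lin_form m (fst k) u) / fst k m).
  destruct (exists_between (map bound (neg_at L)) (map bound (pos_at L))) as [t [Hlow Hup]].
  { intros l v [q [<- [Hq Nq]%in_neg_at]]%in_map_iff [p [<- [Hp Pp]%in_pos_at]]%in_map_iff.
    specialize (Hu _ (cancel_at_in_eliminate L p q Hp Pp Hq Nq)).
    unfold cancel_at in Hu; simpl in Hu. rewrite lin_form_comb in Hu. unfold bound.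
    apply Rmult_le_reg_r with (fst p m * - fst q m); [nra|].
    replace ((snd q - lin_form m (fst q) u) / fst q m * (fst p m * - fst q m))
      with (- (snd q - lin_form m (fst q) u) * fst p m) by (field; lra).
    replace ((snd p - lin_form m (fst p) u) / fst p m * (fst p m * - fst q m))
      with ((snd p - lin_form m (fst p) u) * - fst q m) by (field; lra).
    lra. }
  exists (fun i => if Nat.eqb i m then t else u i). intros k Hk.
  rewrite lin_form_S, Nat.eqb_refl.
  rewrite (lin_form_ext m _ _ u) by (intros i Hi; destruct (Nat.eqb_spec i m); [lia|auto]).
  destruct (Rtotal_order (fst k m) 0) as [Hneg|[Hzero|Hpos]].
  - assert (Ht : bound k <= t) by (apply Hlow, in_map, in_neg_at; auto).
    unfold bound in Ht. apply (Rmult_le_compat_neg_l (fst k m)) in Ht; [|lra].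
    field_simplify in Ht; lra.
  - rewrite Hzero, Rmult_0_l, Rplus_0_r. apply Hu. apply in_or_app. left. apply in_zero_at. auto.
  - assert (Ht : t <= bound k) by (apply Hup, in_map, in_pos_at; auto).
    unfold bound in Ht. apply (Rmult_le_compat_l (fst k m)) in Ht; [|lra].
    field_simplify in Ht; lra.
Qed.

End Elimination.

(* Farkas' lemma, by Fourier-Motzkin elimination of one coordinate at a time. *)
Theorem infeasible_derivable m L : ~ feasible m L ->
  exists a, (forall i, (i < m)%nat -> a i = 0) /\ derivable L a (-1).
Proof.
  revert L. induction m as [|m IH]; intros L HL.
  - destruct (classic (exists k, In k L /\ snd k < 0)) as [[[a c] [Hk Hneg]]|Hnone].
    + exists (fun i => / (- c) * a i). split; [lia|]. simpl in Hneg.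
      replace (-1) with (/ (- c) * c) by (field; lra).
      apply der_scale; [left; apply Rinv_0_lt_compat; lra|apply der_hyp; auto].
    + exfalso. apply HL. exists (fun _ => 0). intros k Hk. unfold lin_form; simpl.
      apply Rnot_lt_le. intros H. apply Hnone. exists k. auto.
  - destruct (IH (eliminate m L)) as [a [Ha Hd]]; [intros H; apply HL, eliminate_feasible; auto|].
    exists a. split.
    + intros i Hi. destruct (Nat.eq_dec i m) as [->|Hne]; [|apply Ha; lia].
      apply (derivable_coord_zero _ m _ _ Hd), eliminate_coord_zero.
    + apply (derivable_trans _ _ _ _ Hd), eliminate_derivable.
Qed.

Definition conic_comb (n : nat) (ws : list (R * expo)) (q : expo) : Prop :=
  (forall pr, In pr ws -> 0 <= fst pr) /\
  forall i, (i < n)%nat -> lsum ws (fun pr => fst pr * coordR (snd pr) i) = coordR q i.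

Section NotInFace.
Variables (n : nat) (A : list expo) (b : expo).

(* A solution [u] of this system is exactly a witness [w = u] of [in_face_avoiding_0 n A b]
   normalised to [dotR n u b >= 1]. *)
Definition face_system : list constraint :=
  ((fun i => - coordR b i), -1) :: map (fun p => ((fun i => coordR p i - coordR b i), 0)) A.

Definition face_comb (a : nat -> R) (c : R) : Prop :=
  exists (ws : list (R * expo)) (k : R), 0 <= k /\ - k <= c /\
    (forall pr, In pr ws -> 0 <= fst pr /\ In (snd pr) A) /\
    forall i, a i = lsum ws (fun pr => fst pr * (coordR (snd pr) i - coordR b i)) - k * coordR b i.

Lemma derivable_face_comb a c : derivable face_system a c -> face_comb a c.
Proof.
  induction 1 as [a c Hin|a1 c1 a2 c2 _ [w1 [k1 [? [? [Hw1 E1]]]]] _ [w2 [k2 [? [? [Hw2 E2]]]]]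
                  |s a c Hs _ [w [k [? [? [Hw E]]]]]|c Hc].
  - destruct Hin as [Hin|[p [Hin Hp]]%in_map_iff]; injection Hin as <- <-.
    + exists [], 1. split; [lra|split; [lra|split]]; [intros _ []|intros i; simpl; ring].
    + exists [(1, p)], 0. split; [lra|split; [lra|split]].
      * intros pr [<-|[]]. simpl. split; [lra|auto].
      * intros i. simpl. ring.
  - exists (w1 ++ w2), (k1 + k2). split; [lra|split; [lra|split]].
    + intros pr Hpr. apply in_app_or in Hpr as [|]; auto.
    + intros i. rewrite lsum_app, E1, E2. ring.
  - exists (map (fun pr => (s * fst pr, snd pr)) w), (s * k). split; [nra|split; [nra|split]].
    + intros pr [pr' [<- Hpr']]%in_map_iff. simpl. destruct (Hw pr' Hpr'). split; [nra|auto].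
    + intros i. rewrite lsum_map, E. simpl. rewrite Rmult_minus_distr_l, <- lsum_scal_l.
      f_equal; [apply lsum_ext; intros; ring|ring].
  - exists [], 0. split; [lra|split; [lra|split]]; [intros _ []|intros i; simpl; ring].
Qed.

Lemma face_system_infeasible : ~ in_face_avoiding_0 n A b -> ~ feasible n face_system.
Proof.
  intros Hnf [u Hu]. apply Hnf. exists u.
  assert (Edot : forall p, lin_form n (fun i => coordR p i - coordR b i) u = dotR n u p - dotR n u b).
  { intros p. unfold lin_form, dotR. rewrite <- lsum_sub. apply lsum_ext. intros; ring. }
  split.
  - intros p Hp. specialize (Hu _ (in_cons _ _ _ (in_map _ _ _ Hp))). simpl in Hu.
    rewrite Edot in Hu. lra.
  - specialize (Hu _ (in_eq _ _)). simpl in Hu.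
    replace (lin_form n (fun i => - coordR b i) u) with (- dotR n u b) in Hu; [lra|].
    replace (- dotR n u b) with (-1 * dotR n u b) by ring.
    unfold lin_form, dotR. rewrite <- lsum_scal_l. apply lsum_ext. intros; ring.
Qed.

(* Farkas: the infeasible system yields [sum_p mu_p (p - b) = k b] with [k >= 1];
   dividing by [sum_p mu_p + k] writes [b] with total weight below [1]. *)
Lemma conic_comb_of_not_in_face : ~ in_face_avoiding_0 n A b ->
  exists ws, (forall pr, In pr ws -> In (snd pr) A) /\ conic_comb n ws b /\ lsum ws fst < 1.
Proof.
  intros Hnf.
  destruct (infeasible_derivable n face_system (face_system_infeasible Hnf)) as [a [Ha Hd]].
  destruct (derivable_face_comb _ _ Hd) as [ws [k [Hk [Hk1 [Hws Ea]]]]].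
  assert (Hs : 0 <= lsum ws fst) by (apply lsum_nonneg; intros; apply Hws; auto).
  set (D := lsum ws fst + k). assert (HD : 0 < D) by (unfold D; lra).
  exists (map (fun pr => (fst pr / D, snd pr)) ws). split; [|split; [split|]].
  - intros pr [pr' [<- Hpr]]%in_map_iff. exact (proj2 (Hws pr' Hpr)).
  - intros pr [pr' [<- Hpr]]%in_map_iff. simpl. destruct (Hws pr' Hpr).
    apply Rmult_le_pos; [auto|left; apply Rinv_0_lt_compat, HD].
  - intros i Hi. specialize (Ea i). rewrite Ha in Ea by auto. rewrite lsum_map. simpl.
    assert (Ew : lsum ws (fun pr => fst pr * coordR (snd pr) i) = D * coordR b i).
    { assert (lsum ws (fun pr => fst pr * (coordR (snd pr) i - coordR b i))
              = lsum ws (fun pr => fst pr * coordR (snd pr) i) - lsum ws fst * coordR b i).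
      { rewrite <- lsum_scal_r, <- lsum_sub. apply lsum_ext. intros; ring. }
      unfold D. lra. }
    transitivity (/ D * lsum ws (fun pr => fst pr * coordR (snd pr) i)).
    + rewrite <- lsum_scal_l. apply lsum_ext. intros. unfold Rdiv. ring.
    + rewrite Ew. field. lra.
  - rewrite lsum_map. simpl. unfold Rdiv. rewrite lsum_scal_r.
    apply Rmult_lt_reg_r with D; auto. rewrite Rmult_assoc, Rinv_l by lra. unfold D. lra.
Qed.

End NotInFace.

Lemma fold_right_Rmult_init (l : list R) y : fold_right Rmult y l = fold_right Rmult 1 l * y.
Proof. induction l; simpl; [ring|]. rewrite IHl. ring. Qed.

Lemma prod_indicator n i y : (i < n)%nat ->
  fold_right Rmult 1 (map (fun j => if Nat.eqb j i then y else 1) (seq 0 n)) = y.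
Proof.
  induction n as [|n IH]; intros Hi; [lia|].
  rewrite seq_S, map_app, fold_right_app. simpl. rewrite Rmult_1_r, fold_right_Rmult_init.
  destruct (Nat.eqb_spec n i) as [->|Hne]; [|rewrite IH by lia; ring].
  rewrite (map_ext_in _ (fun _ => 1)).
  - enough (E : forall l, fold_right Rmult 1 (map (fun _ : nat => 1) l) = 1) by (rewrite E; ring).
    induction l; simpl; [|rewrite IHl]; ring.
  - intros j Hj. apply in_seq in Hj. destruct (Nat.eqb_spec j i); [lia|reflexivity].
Qed.

Lemma nth_scaled_unit n i m j : (j < n)%nat ->
  nth j (scaled_unit n i m) 0%nat = if Nat.eqb j i then m else 0%nat.
Proof.
  intros Hj. unfold scaled_unit.
  rewrite (nth_indep _ 0%nat ((fun k => if Nat.eqb k i then m else 0%nat) n))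
    by (rewrite length_map, length_seq; lia).
  rewrite (map_nth (fun k => if Nat.eqb k i then m else 0%nat) (seq 0 n) n j), seq_nth by lia.
  reflexivity.
Qed.

Lemma monomial_scaled_unit n i m x : (i < n)%nat -> monomial n (scaled_unit n i m) x = x i ^ m.
Proof.
  intros Hi. rewrite <- (prod_indicator n i (x i ^ m)) by auto. unfold monomial. f_equal.
  apply map_ext_in. intros j Hj. apply in_seq in Hj.
  rewrite nth_scaled_unit by lia. destruct (Nat.eqb_spec j i) as [->|]; reflexivity.
Qed.

Lemma monomial_zero_expo n x : monomial n (zero_expo n) x = 1.
Proof.
  unfold monomial, zero_expo. induction (seq 0 n) as [|j l IH]; [reflexivity|].
  simpl. rewrite IH, nth_repeat. ring.
Qed.

Lemma monomial_even_nonneg n p x : even_expo p -> 0 <= monomial n p x.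
Proof.
  intros Hp. unfold monomial. induction (seq 0 n) as [|j l IH]; simpl; [lra|].
  apply Rmult_le_pos; [|exact IH]. destruct (Hp j) as [k ->]. rewrite pow_mult.
  apply pow_le, pow2_ge_0.
Qed.

Lemma monomial_eq_0 n p x i : (i < n)%nat -> (0 < nth i p 0)%nat -> x i = 0 -> monomial n p x = 0.
Proof.
  intros Hi Hp Hx. assert (Hin : In i (seq 0 n)) by (apply in_seq; lia). unfold monomial.
  induction (seq 0 n) as [|j l IH]; [destruct Hin|]. simpl.
  destruct Hin as [->|Hin]; [rewrite Hx, pow_i by lia; ring|rewrite IH by auto; ring].
Qed.

Definition log_monomial (n : nat) (p : expo) (x : nat -> R) : R :=
  lsum (seq 0 n) (fun i => coordR p i * ln (Rabs (x i))).

Lemma abs_monomial_exp n p x : (forall i, (i < n)%nat -> (0 < nth i p 0)%nat -> x i <> 0) ->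
  Rabs (monomial n p x) = exp (log_monomial n p x).
Proof.
  unfold monomial, log_monomial. intros Hx.
  assert (Hl : forall i, In i (seq 0 n) -> (0 < nth i p 0)%nat -> x i <> 0)
    by (intros i Hi; apply in_seq in Hi; apply Hx; lia).
  clear Hx. induction (seq 0 n) as [|j l IH]; [simpl; rewrite exp_0; apply Rabs_R1|].
  cbn [map fold_right]. rewrite lsum_cons, exp_plus, Rabs_mult, IH by (intros; apply Hl; simpl; auto).
  f_equal. rewrite <- RPow_abs. unfold coordR.
  destruct (nth j p 0%nat) as [|k] eqn:E; [simpl; rewrite Rmult_0_l, exp_0; reflexivity|].
  rewrite <- E, <- Rpower_pow by (apply Rabs_pos_lt, Hl; simpl; auto; lia). reflexivity.
Qed.

Section ConicCombination.
Variables (n : nat) (ws : list (R * expo)) (q : expo).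
Hypothesis Hq : conic_comb n ws q.

Lemma conic_comb_support pr i : In pr ws -> 0 < fst pr -> (i < n)%nat ->
  (0 < nth i (snd pr) 0)%nat -> (0 < nth i q 0)%nat.
Proof.
  intros Hin Hpos Hi Hpi. destruct Hq as [Hw Hrep]. apply INR_lt. simpl. fold (coordR q i).
  rewrite <- Hrep by auto. apply Rlt_le_trans with (fst pr * coordR (snd pr) i).
  - apply Rmult_lt_0_compat; [auto|apply lt_0_INR; auto].
  - apply (elem_le_lsum ws (fun pr => fst pr * coordR (snd pr) i)); auto.
    intros b Hb. apply Rmult_le_pos; [apply Hw; auto|apply pos_INR].
Qed.

Lemma log_monomial_conic_comb x :
  log_monomial n q x = lsum ws (fun pr => fst pr * log_monomial n (snd pr) x).
Proof.
  destruct Hq as [_ Hrep]. unfold log_monomial.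
  transitivity (lsum (seq 0 n) (fun i => lsum ws (fun pr => fst pr * coordR (snd pr) i * ln (Rabs (x i))))).
  - apply lsum_ext. intros i Hi. apply in_seq in Hi. rewrite <- Hrep, lsum_scal_r by lia. reflexivity.
  - rewrite lsum_swap. apply lsum_ext. intros. rewrite <- lsum_scal_l. apply lsum_ext. intros; ring.
Qed.

Lemma abs_monomial_conic_comb x :
  monomial n q x = 0 \/
  (Rabs (monomial n q x) = exp (lsum ws (fun pr => fst pr * log_monomial n (snd pr) x)) /\
   forall pr, In pr ws -> 0 < fst pr ->
     Rabs (monomial n (snd pr) x) = exp (log_monomial n (snd pr) x)).
Proof.
  destruct (classic (exists i, (i < n)%nat /\ (0 < nth i q 0)%nat /\ x i = 0))
    as [[i [Hi [Hqi Hx]]]|Hnz]; [left; apply (monomial_eq_0 n q x i); auto|right].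
  assert (Hsupp : forall i, (i < n)%nat -> (0 < nth i q 0)%nat -> x i <> 0)
    by (intros i Hi Hqi Hx; apply Hnz; exists i; auto).
  split.
  - rewrite <- log_monomial_conic_comb. apply abs_monomial_exp, Hsupp.
  - intros pr Hpr Hpos. apply abs_monomial_exp. intros i Hi Hpi.
    apply Hsupp, (conic_comb_support pr); auto.
Qed.

End ConicCombination.

(* weighted AM-GM *)
Lemma abs_monomial_le_convex_comb n ws q x : conic_comb n ws q -> lsum ws fst = 1 ->
  Rabs (monomial n q x) <= lsum ws (fun pr => fst pr * Rabs (monomial n (snd pr) x)).
Proof.
  intros Hq H1. pose proof (proj1 Hq) as Hw.
  destruct (abs_monomial_conic_comb n ws q Hq x) as [->|[-> Hp]].
  - rewrite Rabs_R0. apply lsum_nonneg. intros. apply Rmult_le_pos; [auto|apply Rabs_pos].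
  - eapply Rle_trans; [apply exp_convex_comb; auto|]. apply lsum_le. intros pr Hpr.
    destruct (Hw pr Hpr) as [Hpos|<-]; [rewrite Hp by auto|]; lra.
Qed.

Lemma abs_monomial_le_Rpower n ws q x T : conic_comb n ws q -> 1 <= T ->
  (forall pr, In pr ws -> Rabs (monomial n (snd pr) x) <= T) ->
  Rabs (monomial n q x) <= Rpower T (lsum ws fst).
Proof.
  intros Hq HT Hbound. pose proof (proj1 Hq) as Hw. unfold Rpower.
  destruct (abs_monomial_conic_comb n ws q Hq x) as [->|[-> Hp]];
    [rewrite Rabs_R0; left; apply exp_pos|].
  apply exp_le_exp. rewrite <- lsum_scal_r. apply lsum_le. intros pr Hpr.
  destruct (Hw pr Hpr) as [Hpos|<-]; [|lra]. apply Rmult_le_compat_l; [lra|].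
  rewrite <- (ln_exp (log_monomial n (snd pr) x)), <- Hp by auto.
  apply ln_le; [rewrite Hp by auto; apply exp_pos|auto].
Qed.

Lemma in_V_in_A n A v : in_V n A v -> In v A.
Proof. intros [[[<-|Hv] _] Hz]; [contradiction|exact Hv]. Qed.

Lemma gem_degenerate_in_V0c n A b : gem_degenerate n A b -> in_V0c n A b.
Proof.
  intros [Hb [HnV [w [_ Hw]]]]. split; [exact Hb|]. intros HV0. apply HnV. split; [exact HV0|].
  intros ->. unfold dotR, coordR, zero_expo in Hw.
  rewrite (lsum_ext _ _ (fun _ => 0)), lsum_const in Hw; [lra|].
  intros i Hi. apply in_seq in Hi. rewrite nth_repeat. simpl. ring.
Qed.

Section Polynomial.
Variables (n : nat) (A : list expo) (c : expo -> R) (lam : expo -> expo -> R).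
Hypothesis HC1 : cond_C1 n A.
Hypothesis HB : min_bary_coords n A lam.

Definition vertex_sum (x : nat -> R) : R := lsum_if (in_V n A) A (fun v => monomial n v x).

Lemma vertex_sum_nonneg x : 0 <= vertex_sum x.
Proof. apply lsum_if_nonneg. intros v _ Hv. apply monomial_even_nonneg, HC1, Hv. Qed.

Lemma abs_monomial_le_bary p x : in_V0c n A p ->
  Rabs (monomial n p x) <= 1 + lsum_if (in_V n A) A (fun v => lam p v * monomial n v x).
Proof.
  intros Hp. destruct (HB p Hp) as [Hlam [W [Hnd [HWV0 [_ [HWpos [_ [Hco H1]]]]]]]].
  set (g := fun w => when (in_V n A w) (lam p w * Rabs (monomial n w x))).
  assert (Hconic : conic_comb n (map (fun w => (lam p w, w)) W) p).
  { split; [intros pr [w [<- Hw]]%in_map_iff; simpl; left; auto|].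
    intros i Hi. rewrite lsum_map. apply Hco, Hi. }
  eapply Rle_trans; [apply abs_monomial_le_convex_comb; [exact Hconic|rewrite lsum_map; exact H1]|].
  rewrite lsum_map. simpl.
  (* the zero exponent, if it lies in [W], contributes its weight; all other [w] are vertices *)
  rewrite (lsum_ext _ _ (fun w => when (w = zero_expo n) (lam p w * Rabs (monomial n w x)) + g w)).
  2:{ intros w Hw. unfold g. destruct (classic (w = zero_expo n)) as [->|Hnz].
      - rewrite (when_true (_ = _)), when_false by (auto; intros [_ []]; reflexivity). ring.
      - rewrite (when_false (_ = _)), when_true by (auto; split; auto). ring. }
  rewrite lsum_add. apply Rplus_le_compat.
  - rewrite <- H1. apply lsum_le. intros w Hw. destruct (classic (w = zero_expo n)) as [->|Hnz].
    + rewrite when_true, monomial_zero_expo, Rabs_R1 by reflexivity. lra.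
    + rewrite when_false by auto. left. apply HWpos, Hw.
  - apply Rle_trans with (lsum (zero_expo n :: A) g).
    + apply lsum_incl_le; [exact Hnd|intros w Hw; apply (HWV0 w Hw)|].
      intros v _. unfold g, when. destruct (decide _) as [Hv|]; [|lra].
      apply Rmult_le_pos; [apply Hlam, Hv|apply Rabs_pos].
    + rewrite lsum_cons. unfold g at 1. rewrite when_false, Rplus_0_l by (intros [_ []]; reflexivity).
      apply lsum_if_le. intros v _ Hv.
      rewrite Rabs_pos_eq; [lra|apply monomial_even_nonneg, HC1, Hv].
Qed.

Lemma abs_monomial_le_vertex_sum p x : In p A -> Rabs (monomial n p x) <= 1 + vertex_sum x.
Proof.
  intros Hp. pose proof (vertex_sum_nonneg x).
  destruct (classic (in_V n A p)) as [HV|HnV].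
  - rewrite Rabs_pos_eq by (apply monomial_even_nonneg, HC1, HV).
    enough (monomial n p x <= vertex_sum x) by lra.
    rewrite <- (when_true (in_V n A p) (monomial n p x)) by exact HV.
    apply (elem_le_lsum A (fun v => when (in_V n A v) (monomial n v x))); [exact Hp|].
    intros v _. unfold when. destruct (decide _) as [Hv|]; [apply monomial_even_nonneg, HC1, Hv|lra].
  - destruct (classic (p = zero_expo n)) as [->|Hnz].
    + rewrite monomial_zero_expo, Rabs_R1. lra.
    + assert (Hp0 : in_V0c n A p) by (split; [exact Hp|intros HV0; apply HnV; split; auto]).
      eapply Rle_trans; [apply abs_monomial_le_bary, Hp0|]. apply Rplus_le_compat_l.
      apply lsum_if_le. intros v _ Hv. destruct (HB p Hp0) as [Hlam _].
      destruct (Hlam v (proj1 Hv)). pose proof (monomial_even_nonneg n v x (HC1 v Hv)). nra.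
Qed.

(* [|x^b|] is at most a power [< 1] of [1 + vertex_sum x], hence sublinear in it. *)
Lemma abs_monomial_not_in_face_le b eps : ~ in_face_avoiding_0 n A b -> 0 < eps ->
  exists C, 0 <= C /\ forall x, Rabs (monomial n b x) <= eps * (1 + vertex_sum x) + C.
Proof.
  intros Hnf Heps. destruct (conic_comb_of_not_in_face n A b Hnf) as [ws [HwsA [Hconic Hlt]]].
  destruct (Rpower_sublinear (lsum ws fst) eps Hlt Heps) as [C [HC Hpow]].
  exists C. split; [exact HC|]. intros x. pose proof (vertex_sum_nonneg x).
  eapply Rle_trans; [|apply Hpow; lra].
  apply abs_monomial_le_Rpower; [exact Hconic|lra|].
  intros pr Hpr. apply abs_monomial_le_vertex_sum, HwsA, Hpr.
Qed.

Definition gem_weight (b : expo) : R :=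
  if decide (even_expo b) then - Rmin 0 (c b) else Rabs (c b).

Lemma term_ge_gem_weight b x : in_V0c n A b ->
  - gem_weight b * (1 + lsum_if (in_V n A) A (fun v => lam b v * monomial n v x))
  <= c b * monomial n b x.
Proof.
  intros Hb. pose proof (abs_monomial_le_bary b x Hb) as Hbary.
  set (B := 1 + lsum_if _ _ _) in *. unfold gem_weight. destruct (decide (even_expo b)) as [He|Ho].
  - pose proof (monomial_even_nonneg n b x He). rewrite Rabs_pos_eq in Hbary by auto.
    pose proof (Rmin_l 0 (c b)). pose proof (Rmin_r 0 (c b)). nra.
  - rewrite Ropp_mult_distr_l_reverse. apply Rmult_ge_opp_abs_bound, Hbary.
Qed.

Definition gem_coef (v : expo) : R := lsum_if (gem_degenerate n A) A (fun b => gem_weight b * lam b v).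

Lemma gem_coef_eq v :
  lsum_if (fun b => gem_degenerate n A b /\ ~ even_expo b) A (fun b => Rabs (c b) * lam b v)
  - lsum_if (fun b => gem_degenerate n A b /\ even_expo b) A (fun b => Rmin 0 (c b) * lam b v)
  = gem_coef v.
Proof.
  unfold gem_coef. rewrite !lsum_if_when, <- lsum_sub. apply lsum_ext. intros b _.
  unfold when, gem_weight.
  destruct (decide (gem_degenerate n A b)), (decide (even_expo b)),
    (decide (_ /\ ~ _)), (decide (_ /\ even_expo b)); tauto || ring.
Qed.

Lemma lsum_gem_bary x :
  lsum_if (gem_degenerate n A) A
    (fun b => gem_weight b * (1 + lsum_if (in_V n A) A (fun v => lam b v * monomial n v x)))
  = lsum_if (gem_degenerate n A) A gem_weight
    + lsum_if (in_V n A) A (fun v => gem_coef v * monomial n v x).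
Proof.
  rewrite !lsum_if_when.
  transitivity (lsum A (fun b => when (gem_degenerate n A b) (gem_weight b)
    + lsum A (fun v => when (in_V n A v)
                         (when (gem_degenerate n A b) (gem_weight b * lam b v) * monomial n v x)))).
  - apply lsum_ext. intros b _. rewrite lsum_if_when. unfold when.
    destruct (decide (gem_degenerate n A b)).
    + rewrite Rmult_plus_distr_l, Rmult_1_r, <- lsum_scal_l. f_equal.
      apply lsum_ext. intros v _. destruct (decide _); ring.
    + rewrite (lsum_ext _ _ (fun _ => 0)), lsum_const; [ring|]. intros v _. destruct (decide _); ring.
  - rewrite lsum_add, lsum_swap. f_equal. apply lsum_ext. intros v _.
    unfold gem_coef. rewrite lsum_if_when. unfold when at 1 3. destruct (decide (in_V n A v)).
    + apply lsum_scal_r.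
    + rewrite lsum_const. ring.
Qed.

Lemma peval_ge_minorant x B :
  (forall a, In a A -> ~ in_V n A a -> ~ gem_degenerate n A a -> Rabs (monomial n a x) <= B) ->
  lsum_if (in_V n A) A (fun v => c v * monomial n v x)
  - lsum_if (gem_degenerate n A) A
      (fun b => gem_weight b * (1 + lsum_if (in_V n A) A (fun v => lam b v * monomial n v x)))
  - lsum_if (fun a => ~ in_V n A a /\ ~ gem_degenerate n A a) A (fun a => Rabs (c a)) * B
  <= peval n A c x.
Proof.
  intros Hrest. rewrite lsum_if_scal_r, !lsum_if_when, <- !lsum_sub.
  apply lsum_le. intros a Ha. unfold when.
  destruct (decide (in_V n A a)) as [HV|HnV].
  - destruct (decide (gem_degenerate n A a)) as [[_ [HnV _]]|]; [contradiction|].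
    destruct (decide (_ /\ _)) as [[HnV _]|]; [contradiction|]. lra.
  - destruct (decide (gem_degenerate n A a)) as [Hg|Hng].
    + destruct (decide (_ /\ _)) as [[_ Hng]|]; [contradiction|].
      pose proof (term_ge_gem_weight a x (gem_degenerate_in_V0c n A a Hg)). lra.
    + destruct (decide (_ /\ _)) as [_|[]]; [|split; assumption].
      pose proof (Rmult_ge_opp_abs_bound (c a) _ _ (Hrest a Ha HnV Hng)). lra.
Qed.

Hypothesis Hdom : forall a, in_V n A a ->
  c a > lsum_if (fun b => gem_degenerate n A b /\ ~ even_expo b) A (fun b => Rabs (c b) * lam b a)
      - lsum_if (fun b => gem_degenerate n A b /\ even_expo b) A (fun b => Rmin 0 (c b) * lam b a).

Lemma peval_ge_vertex_sum : exists d K, 0 < d /\ forall x, d * vertex_sum x - K <= peval n A c x.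
Proof.
  destruct (exists_pos_lower_bound A (in_V n A) (fun v => c v - gem_coef v)) as [dl [Hdl Hgap]].
  { intros v _ Hv. specialize (Hdom v Hv). rewrite gem_coef_eq in Hdom. lra. }
  set (eta := lsum_if (fun a => ~ in_V n A a /\ ~ gem_degenerate n A a) A (fun a => Rabs (c a))).
  assert (Heta : 0 <= eta) by (apply lsum_if_nonneg; intros; apply Rabs_pos).
  set (eps := dl / (2 * (eta + 1))).
  assert (Heps : 0 < eps) by (apply Rdiv_lt_0_compat; lra).
  assert (Heta_eps : eta * eps <= dl / 2).
  { unfold eps. apply Rmult_le_reg_r with (2 * (eta + 1)); [lra|]. field_simplify; [nra|lra]. }
  destruct (exists_uniform_bound A (fun a C => ~ in_V n A a -> ~ gem_degenerate n A a ->
      forall x, Rabs (monomial n a x) <= eps * (1 + vertex_sum x) + C)) as [C HC].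
  { intros a C C' _ HCC' H HnV Hng x. specialize (H HnV Hng x). lra. }
  { intros a Ha. destruct (classic (~ in_V n A a /\ ~ gem_degenerate n A a)) as [[HnV Hng]|Hother];
      [|exists 0; tauto].
    destruct (abs_monomial_not_in_face_le a eps) as [C [_ HC]]; [|exact Heps|exists C; auto].
    intros Hface. apply Hng. repeat split; assumption. }
  set (K1 := lsum_if (gem_degenerate n A) A gem_weight).
  exists (dl / 2), (dl / 2 + K1 + eta * C). split; [lra|]. intros x.
  pose proof (peval_ge_minorant x _ (fun a Ha HnV Hng => HC a Ha HnV Hng x)) as Hmin.
  pose proof (vertex_sum_nonneg x) as HS. set (S := vertex_sum x) in *.
  rewrite lsum_gem_bary in Hmin. fold K1 eta in Hmin.
  assert (HdS : S * dl <= lsum_if (in_V n A) A (fun v => c v * monomial n v x)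
                          - lsum_if (in_V n A) A (fun v => gem_coef v * monomial n v x)).
  { unfold S, vertex_sum. rewrite lsum_if_scal_r, <- lsum_if_sub. apply lsum_if_le. intros v Hv HV.
    pose proof (Hgap v Hv HV). pose proof (monomial_even_nonneg n v x (HC1 v HV)). nra. } assert (eta * eps * (1 + S) <= dl / 2 * (1 + S)) by (apply Rmult_le_compat_r; lra).
  nra.
Qed.
End Polynomial.

(* (C3) puts a pure power [x_i^(2k)] among the vertex monomials for every [i]. *)
Lemma sq_norm_le_vertex_sum n A x : cond_C1 n A -> cond_C3 n A ->
  lsum (seq 0 n) (fun i => x i ^ 2) - INR n <= INR n * vertex_sum n A x.
Proof.
  intros HC1 HC3.
  replace (INR n * vertex_sum n A x) with (lsum (seq 0 n) (fun _ => vertex_sum n A x))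
    by (rewrite lsum_const, length_seq; reflexivity).
  replace (INR n) with (lsum (seq 0 n) (fun _ => 1)) at 1 by (rewrite lsum_const, length_seq; ring).
  rewrite <- lsum_sub. apply lsum_le. intros i Hi. apply in_seq in Hi.
  destruct (HC3 i ltac:(lia)) as [k [Hk HV]].
  apply Rle_trans with (monomial n (scaled_unit n i (2 * k)) x).
  - rewrite monomial_scaled_unit by lia. apply sqr_sub_1_le_pow_even, Hk.
  - rewrite <- (when_true _ _ HV). unfold vertex_sum. rewrite lsum_if_when.
    apply (elem_le_lsum A (fun v => when (in_V n A v) (monomial n v x))); [exact (in_V_in_A n A _ HV)|].
    intros v _. unfold when. destruct (decide _) as [Hv|]; [apply monomial_even_nonneg, HC1, Hv|lra].
Qed.

Lemma coercive_of_sq_norm_lower_bound n A c a K : 0 < a ->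
  (forall x, a * norm2 n x ^ 2 - K <= peval n A c x) -> coercive n A c.
Proof.
  intros Ha Hlow M. set (r := (Rabs M + Rabs K) / a + 1).
  assert (Har : a * r = Rabs M + Rabs K + a) by (unfold r; field; lra).
  assert (Hr : 1 <= r).
  { pose proof (Rabs_pos M). pose proof (Rabs_pos K). apply Rmult_le_reg_l with a; nra. }
  exists r. intros x Hx. specialize (Hlow x). clearbody r.
  assert (r <= norm2 n x ^ 2) by nra.
  assert (a * r <= a * norm2 n x ^ 2) by (apply Rmult_le_compat_l; lra).
  pose proof (Rle_abs M). pose proof (Rle_abs K). lra.
Qed.

Theorem mainTheorem1 (n : nat) (A : list expo) (c : expo -> R)
  (lam : expo -> expo -> R) :
  poly_support n A c ->
  cond_C1 n A -> cond_C2 n A c -> cond_C3 n A ->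
  min_bary_coords n A lam ->
  (forall a, in_V n A a ->
     c a >
       lsum_if (fun b => gem_degenerate n A b /\ ~ even_expo b) A
               (fun b => Rabs (c b) * lam b a)
     - lsum_if (fun b => gem_degenerate n A b /\ even_expo b) A
               (fun b => Rmin 0 (c b) * lam b a)) ->
  coercive n A c.
Proof.
  intros _ HC1 _ HC3 Hbary Hdom.
  destruct (peval_ge_vertex_sum n A c lam HC1 Hbary Hdom) as [d [K [Hd Hlow]]].
  assert (Hn : 0 < INR n + 1) by (pose proof (pos_INR n); lra).
  apply (coercive_of_sq_norm_lower_bound n A c (d / (INR n + 1)) (d + K));
    [apply Rdiv_lt_0_compat; assumption|].
  intros x. specialize (Hlow x).
  pose proof (sq_norm_le_vertex_sum n A x HC1 HC3) as Hgrowth.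
  pose proof (vertex_sum_nonneg n A HC1 x) as HS.
  unfold norm2. rewrite pow2_sqrt by (apply lsum_nonneg; intros; apply pow2_ge_0).
  enough (d / (INR n + 1) * lsum (seq 0 n) (fun i => x i ^ 2) <= d * (1 + vertex_sum n A x)) by lra.
  replace (d * (1 + vertex_sum n A x)) with (d / (INR n + 1) * ((INR n + 1) * (1 + vertex_sum n A x)))
    by (field; lra).
  apply Rmult_le_compat_l; [apply Rlt_le, Rdiv_lt_0_compat; assumption|]. nra.
Qed.
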